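(* Let $I$ be a monomial ideal in $R=K[x_1,\ldots,x_d]$ ($K$ a field), and let $r=\frac{p}{q}$ be a positive rational number with $p,q$ positive integers. Define the bounded convex set $$\mathcal{C}(I,r)=r\cdot \operatorname{np}(I)+\left(d-\tfrac{1}{q}\right)\cdot S_d$$ (Minkowski sum). If $\mathbf{x}^{\mathbf{a}}$ is a minimal monomial generator of $\overline{I^r}$, then $\mathbf{a}\in\mathcal{C}(I,r)$. Moreover, if $\mathbf{a}\in\mathcal{C}(I,r)\cap\mathbb{N}^d$ then $\mathbf{x}^{\mathbf{a}}\in\overline{I^r}$, and consequently $\overline{I^r}=(\{\mathbf{x}^{\mathbf{a}}\mid \mathbf{a}\in\mathcal{C}(I,r)\cap\mathbb{N}^d\})$.
   Context: $\mathbb{N}$ denotes the non-negative integers and $\mathbf{x}^{\mathbf{a}}=x_1^{a_1}\cdots x_d^{a_d}$. For a monomial ideal $I$, $NP(I)$ is the convex hull in $\mathbb{R}^d$ of $\{\mathbf{a}\in\mathbb{N}^d\mid \mathbf{x}^{\mathbf{a}}\in I\}$, and the Newton polytope $\operatorname{np}(I)$ is the convex hull of the exponent vectors of the minimal monomial generators of $I$. For real $r\ge0$, the $r$-th real power is $\overline{I^r}=(\{\mathbf{x}^{\mathbf{a}}\mid \mathbf{a}\in r\cdot NP(I)\cap\mathbb{N}^d\})$, where $r\cdot X=\{r\mathbf{v}\mid\mathbf{v}\in X\}$. $S_d=\{\mathbf{a}\in\mathbb{R}^d\mid a_i\ge0,\ a_1+\cdots+a_d\le1\}$ is the unit simplex.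 The Minkowski sum is $A+B=\{\mathbf{a}+\mathbf{b}\mid \mathbf{a}\in A,\mathbf{b}\in B\}$. *)

From HB Require Import structures.
From mathcomp Require Import all_boot all_order all_algebra.
From mathcomp Require Import reals.
Unset Printing Implicit Defensive.
Import Order.TTheory GRing.Theory Num.Theory.
Local Open Scope ring_scope.

Definition expo (d : nat) := 'I_d -> nat.
Definition vec (R : realType) (d : nat) := 'I_d -> R.

(* Componentwise order on exponents: x^b divides x^a. *)
Definition expo_le d (b a : expo d) : Prop := forall i, (b i <= a i)%N.
Arguments expo_le {d}.

(* A monomial ideal of K[x_1..x_d] is encoded by the set of exponents of the
   monomials it contains; such a set is exactly an upward-closed subset of N^d. *)
Definition monomial_ideal d (E : expo d -> Prop) : Prop :=
  forall a b, E a -> expo_le a b -> E b.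
Arguments monomial_ideal {d}.

Definition gen_ideal d (S : expo d -> Prop) : expo d -> Prop :=
  fun b => exists2 a, S a & expo_le a b.
Arguments gen_ideal {d}.

Definition min_gen d (E : expo d -> Prop) (a : expo d) : Prop :=
  E a /\ forall b, E b -> expo_le b a -> forall i, b i = a i.
Arguments min_gen {d}.

Definition natv (R : realType) d (a : expo d) : vec R d := fun i => (a i)%:R.
Arguments natv R {d}.

Definition conv (R : realType) d (A : vec R d -> Prop) : vec R d -> Prop :=
  fun x => exists n (P : 'I_n -> vec R d) (l : 'I_n -> R),
    [/\ forall k, A (P k), forall k, 0 <= l k, \sum_(k < n) l k = 1
      & forall i, x i = \sum_(k < n) l k * P k i].
Arguments conv R {d}.

Definition NP (R : realType) (d : nat) (E : expo d -> Prop) : vec R d -> Prop :=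
  conv R (fun v => exists2 a, E a & v = natv R a).
Arguments NP R {d}.

Definition np (R : realType) d (E : expo d -> Prop) : vec R d -> Prop :=
  conv R (fun v => exists2 a, min_gen E a & v = natv R a).
Arguments np R {d}.

Definition scale (R : realType) d (r : R) (X : vec R d -> Prop) : vec R d -> Prop :=
  fun v => exists2 w, X w & forall i, v i = r * w i.
Arguments scale {R d}.

Definition minkowski (R : realType) d (A B : vec R d -> Prop) : vec R d -> Prop :=
  fun v => exists a b, [/\ A a, B b & forall i, v i = a i + b i].
Arguments minkowski {R d}.

Definition simplex (R : realType) d : vec R d -> Prop :=
  fun v => (forall i, 0 <= v i) /\ \sum_(i < d) v i <= 1.

Definition real_power (R : realType) d (E : expo d -> Prop) (r : R) : expo d -> Prop :=
  gen_ideal (fun a => scale r (NP R E) (natv R a)).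
Arguments real_power R {d}.

Definition Cset (R : realType) d (E : expo d -> Prop) (p q : nat) : vec R d -> Prop :=
  minkowski (scale (p%:R / q%:R) (np R E))
            (scale (d%:R - q%:R^-1) (simplex R d)).
Arguments Cset R {d}.

From HB Require Import structures.
From mathcomp Require Import all_boot all_order all_algebra.
From mathcomp Require Import reals.
From mathcomp Require Import zify.
From mathcomp.algebra_tactics Require Import ring lra.
From Stdlib Require Import Classical.
Import Order.TTheory GRing.Theory Num.Theory.
Local Open Scope ring_scope.
Set Implicit Arguments.
Unset Strict Implicit.

(* Write a minimal generator as a = r v with v in NP(I).  Some u in np(I) lies
   below v; moving it towards a vertex m of np(I) until a coordinate reaches v,
   we may assume u touches v in some coordinate or u = m.  Then w = a - r u is
   nonnegative, each w_j < 1 (otherwise x^(a - e_j) would still lie in the real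
   power), and some w_j is at most 1 - 1/q: it is 0 at a touching coordinate,
   and at a vertex q w_j = q a_j - p m_j is an integer below q.  Hence
   sum w <= d - 1/q, i.e. w lies in (d - 1/q) S_d.  Conversely NP(I) is stable
   under adding nonnegative vectors, which gives the reverse inclusion. *)

Lemma expo_le_trans d (a b c : expo d) : expo_le a b -> expo_le b c -> expo_le a c.
Proof. by move=> ab bc i; exact: leq_trans (ab i) (bc i). Qed.

Lemma expo_le_sum_lt d (a b : expo d) i :
  expo_le b a -> b i <> a i -> (\sum_j b j < \sum_j a j)%N.
Proof.
move=> ba ne; rewrite (bigD1 i) //= [X in (_ < X)%N](bigD1 i) //=.
have lt_i : (b i < a i)%N by rewrite ltn_neqAle (ba i) andbT; apply/eqP.
by rewrite -addSn leq_add // leq_sum.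
Qed.

Lemma exists_min_gen d (X : expo d -> Prop) a :
  X a -> exists2 m, min_gen X m & expo_le m a.
Proof.
move: a; suff H n a : (\sum_j a j < n)%N -> X a -> exists2 m, min_gen X m & expo_le m a.
  by move=> a; exact: H _ a (ltnSn _).
elim: n a => // n IH a lt_a Xa.
case: (classic (min_gen X a)) => [min_a|not_min]; first by exists a.
have [b [Xb ba [i ne]]] : exists b, [/\ X b, expo_le b a & exists i, b i <> a i].
  apply: NNPP => none; apply: not_min; split=> // b Xb ba i.
  by apply: NNPP => ne; apply: none; exists b; split=> //; exists i.
have [m min_m mb] := IH b (leq_trans (expo_le_sum_lt ba ne) lt_a) Xb.
by exists m => //; exact: expo_le_trans mb ba.
Qed.

Lemma gen_ideal_monomial d (S : expo d -> Prop) : monomial_ideal (gen_ideal S).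
Proof. by move=> a b [c Sc ca] ab; exists c => //; exact: expo_le_trans ca ab. Qed.

Section Convex.
Variables (R : realType) (d : nat) (A : vec R d -> Prop).

Lemma conv_eq x y : conv R A x -> (forall i, x i = y i) -> conv R A y.
Proof. by move=> [n [P [l [AP l0 l1 ex]]]] xy; exists n, P, l; split=> // i; rewrite -xy. Qed.

Lemma conv_mem x : A x -> conv R A x.
Proof.
move=> Ax; exists 1%N, (fun _ => x), (fun _ => 1); split=> //; first by rewrite big_ord1.
by move=> i; rewrite big_ord1 mul1r.
Qed.

Lemma conv_convex x z (t : R) :
  conv R A x -> conv R A z -> 0 <= t <= 1 ->
  conv R A (fun j => (1 - t) * x j + t * z j).
Proof.
move=> [n [P [l [AP l0 l1 ex]]]] [m [Q [k [AQ k0 k1 ez]]]] /andP[t0 t1].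
pose F i := match split i with inl a => P a | inr b => Q b end.
pose L i := match split i with inl a => (1 - t) * l a | inr b => t * k b end.
have FL a : F (lshift m a) = P a by rewrite /F (unsplitK (inl _ a)).
have FR b : F (rshift n b) = Q b by rewrite /F (unsplitK (inr _ b)).
have LL a : L (lshift m a) = (1 - t) * l a by rewrite /L (unsplitK (inl _ a)).
have LR b : L (rshift n b) = t * k b by rewrite /L (unsplitK (inr _ b)).
exists (n + m)%N, F, L; split.
- by move=> i; rewrite /F; case: split.
- move=> i; rewrite /L; case: split => a; apply: mulr_ge0 => //.
  by rewrite subr_ge0.
- rewrite big_split_ord /=.
  under eq_bigr do rewrite LL.
  under [X in _ + X]eq_bigr do rewrite LR.
  by rewrite -!mulr_sumr l1 k1 !mulr1 subrK.
- move=> j; rewrite big_split_ord /=.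
  under [X in _ = X + _]eq_bigr do rewrite LL FL.
  under [X in _ = _ + X]eq_bigr do rewrite LR FR.
  by rewrite ex ez !mulr_sumr; congr (_ + _); apply: eq_bigr => i _; ring.
Qed.

End Convex.

Lemma segment_below (R : realType) d (x y v : vec R d) :
  (forall j, x j <= v j) ->
  exists2 t : R, 0 <= t <= 1 &
    (forall j, (1 - t) * x j + t * y j <= v j) /\
    (t = 1 \/ exists j, (1 - t) * x j + t * y j = v j).
Proof.
move=> xv; case: (boolP [forall j, y j <= v j]) => [/forallP yv|].
  exists 1; first by rewrite ler01 lexx.
  by split; [move=> j; rewrite subrr mul0r add0r mul1r | left].
move/forallPn => [j0]; rewrite -ltNge => vy0.
(* f j is the time at which coordinate j of the segment reaches v j. *)
pose f j := (v j - x j) / (y j - x j).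
have [i vyi f_min] := @arg_minP _ _ _ j0 (fun j => v j < y j) f vy0.
have gap j : v j < y j -> 0 < y j - x j.
  by move=> vy; rewrite subr_gt0; exact: le_lt_trans (xv j) vy.
have [t0 t1] : 0 <= f i /\ f i <= 1.
  have := gap _ vyi; have := xv i => xvi gapi; split.
    by apply: divr_ge0; [rewrite subr_ge0 | exact: ltW].
  by rewrite ler_pdivrMr // mul1r; lra.
exists (f i); first by rewrite t0 t1.
split; last by right; exists i; have := gap _ vyi; rewrite /f => gapi; field; lra.
move=> j; case: (ltP (v j) (y j)) => [vy|yv].
  have : f i * (y j - x j) <= v j - x j by rewrite -ler_pdivlMr ?gap ?f_min.
  lra.
have : (1 - f i) * x j <= (1 - f i) * v j by apply: ler_wpM2l (xv j); lra.
have : f i * y j <= f i * v j by exact: ler_wpM2l.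
lra.
Qed.

Lemma scale_simplex (R : realType) d (t : R) (w : vec R d) :
  (forall i, 0 <= w i) -> \sum_i w i <= t -> scale t (simplex R d) w.
Proof.
move=> w0 sum_w; have w_le_sum i : w i <= \sum_j w j.
  by rewrite (bigD1 i) //= lerDl sumr_ge0.
have [t_eq0|t_neq0] := eqVneq t 0.
  exists (fun _ => 0); first by split=> //; rewrite big1.
  move=> i; rewrite mulr0; have := w0 i; have := w_le_sum i; lra.
have t_gt0 : 0 < t by rewrite lt_neqAle eq_sym t_neq0 (le_trans (sumr_ge0 _ _) sum_w).
exists (fun i => w i / t); last by move=> i; rewrite mulrC divfK.
split; first by move=> i; exact: divr_ge0 (w0 i) (ltW t_gt0).
by rewrite -mulr_suml ler_pdivrMr // mul1r.
Qed.

Lemma scale_simplex_dim0 (R : realType) d (t : R) (w : vec R d) :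
  d = 0%N -> scale t (simplex R d) w.
Proof.
move=> d0; exists (fun _ => 0); first by split=> //; rewrite big1.
by move=> i; have := ltn_ord i; rewrite {2}d0.
Qed.

Lemma sumr_le_dim_sub (R : realType) d (w : 'I_d -> R) j0 c :
  (forall j, w j <= 1) -> w j0 <= 1 - c -> \sum_j w j <= d%:R - c.
Proof.
move=> w1 wj0; rewrite (bigD1 j0) //=.
have : \sum_(j | j != j0) w j <= \sum_(j | j != j0) (1 : R) by exact: ler_sum.
have : \sum_(j < d) (1 : R) = d%:R by rewrite sumr_const card_ord.
rewrite (bigD1 j0) //=; lra.
Qed.

Lemma frac_part_bound (R : realType) (p q a m : nat) : (0 < q)%N ->
  (a%:R - p%:R / q%:R * m%:R < 1 :> R) -> a%:R - p%:R / q%:R * m%:R <= 1 - q%:R^-1 :> R.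
Proof.
move=> q0 lt1; have q_gt0 : (0 : R) < q%:R by rewrite ltr0n.
have scaled (x : R) : q%:R * (x - p%:R / q%:R * m%:R) = q%:R * x - p%:R * m%:R.
  by field; rewrite gt_eqF.
have lt_q : q%:R * a%:R - p%:R * m%:R < q%:R :> R.
  by rewrite -scaled -[X in _ < X]mulr1 ltr_pM2l.
(* q (a - p m / q) is an integer smaller than q. *)
have : (q * a < q + p * m)%N by rewrite -(ltr_nat R) natrD !natrM; lra.
rewrite -addn1 -(ler_nat R) !natrD !natrM => le_int.
rewrite -(ler_pM2l q_gt0) scaled mulrBr mulr1 mulfV ?gt_eqF //; lra.
Qed.

Lemma NP_ge0 (R : realType) d (E : expo d -> Prop) v j : NP R E v -> 0 <= v j.
Proof.
move=> [n [P [l [EP l0 _ ->]]]]; apply: sumr_ge0 => k _.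
by have [a _ ->] := EP k; exact: mulr_ge0.
Qed.

Lemma np_sub_NP (R : realType) d (E : expo d -> Prop) u : np R E u -> NP R E u.
Proof.
move=> [n [P [l [EP l0 l1 eu]]]]; exists n, P, l; split=> // k.
by have [a [Ea _] ->] := EP k; exists a.
Qed.

Lemma NP_above_np (R : realType) d (E : expo d -> Prop) v :
  NP R E v -> exists2 u, np R E u & forall j, u j <= v j.
Proof.
move=> [n [P [l [EP l0 l1 ev]]]].
have [a Ea ePa] := fin_all_exists2 EP.
have [m min_m ma] := fin_all_exists2 (fun k => exists_min_gen (Ea k)).
exists (fun j => \sum_(k < n) l k * natv R (m k) j).
  by exists n, (fun k => natv R (m k)), l; split=> // k; exists (m k).
move=> j; rewrite ev; apply: ler_sum => k _; rewrite ePa.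
by apply: ler_wpM2l => //; rewrite ler_nat; exact: ma.
Qed.

Lemma np_segment_below (R : realType) d (E : expo d -> Prop) (u0 v : vec R d) :
  np R E u0 -> (forall j, u0 j <= v j) ->
  exists2 u, np R E u /\ (forall j, u j <= v j) &
    (exists j, u j = v j) \/ (exists2 m, min_gen E m & forall j, u j = (m j)%:R).
Proof.
move=> np_u0 u0v; have [n [P [l [EP _ l1 _]]]] := np_u0.
have n_gt0 : (0 < n)%N.
  by case: n P l EP l1 => // P l _; rewrite big_ord0 => /eqP; rewrite eq_sym oner_eq0.
have [m min_m ePm] := EP (Ordinal n_gt0).
have np_m : np R E (natv R m) by apply: conv_mem; exists m.
have [t t01 [below end_pt]] := segment_below (natv R m) u0v.
exists (fun j => (1 - t) * u0 j + t * natv R m j); first by split=> //; exact: conv_convex.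
case: end_pt => [t1|]; last by left.
by right; exists m => // j; rewrite t1 subrr mul0r add0r mul1r.
Qed.

Section NPUpward.
Variables (R : realType) (d : nat) (E : expo d -> Prop).
Hypothesis mE : monomial_ideal E.

Lemma NP_add_nat (c : expo d) y : NP R E y -> NP R E (fun j => y j + (c j)%:R).
Proof.
move=> [n [P [l [EP l0 l1 ey]]]].
have [a Ea ePa] := fin_all_exists2 EP.
exists n, (fun k => natv R (fun j => a k j + c j)%N), l; split=> //.
- move=> k; eexists; last reflexivity.
  by apply: mE (Ea k) _ => j; exact: leq_addr.
- move=> j; rewrite ey /natv.
  under [RHS]eq_bigr do rewrite natrD mulrDr.
  rewrite big_split /= -mulr_suml l1 mul1r; congr (_ + _).
  by apply: eq_bigr => k _; rewrite ePa.
Qed.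

(* y + s e_i is the convex combination of y and y + N e_i with weight s / N. *)
Lemma NP_add_coord y i (s : R) :
  NP R E y -> 0 <= s -> NP R E (fun j => y j + (if j == i then s else 0)).
Proof.
move=> NPy s0; set N := Num.Def.archi_bound s.
have sN : s < N%:R by exact: archi_boundP.
have N_gt0 : 0 < (N%:R : R) by exact: le_lt_trans sN.
have t01 : 0 <= s / N%:R <= 1.
  by apply/andP; split; [exact: divr_ge0 (ltW N_gt0) | rewrite ler_pdivrMr // mul1r ltW].
have := conv_convex NPy (NP_add_nat (fun j => if j == i then N else 0%N) NPy) t01.
move/conv_eq; apply=> j; case: (j == i); last by ring.
by field; rewrite gt_eqF.
Qed.

Lemma NP_up y z : NP R E y -> (forall j, y j <= z j) -> NP R E z.
Proof.
move=> NPy yz.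
suff NPk k : (k <= d)%N -> NP R E (fun j : 'I_d => if (j < k)%N then z j else y j).
  by apply: conv_eq (NPk d (leqnn d)) _ => j; rewrite ltn_ord.
elim: k => [_|k IH lt_kd]; first by apply: conv_eq NPy _.
pose i := Ordinal lt_kd.
have yz_i : 0 <= z i - y i by rewrite subr_ge0.
apply: conv_eq (NP_add_coord i (IH (ltnW lt_kd)) yz_i) _ => j.
have [->|ne] := eqVneq j i; first by rewrite ltnn ltnSn; ring.
have ne_k : val j != k by apply: contra ne => /eqP e; apply/eqP/val_inj.
by rewrite addr0 [in RHS]ltnS [in RHS]leq_eqVlt (negbTE ne_k).
Qed.

End NPUpward.

Lemma min_gen_real_power_scale (R : realType) d (E : expo d -> Prop) (r : R) a :
  min_gen (real_power R E r) a -> exists2 v, NP R E v & forall i, (a i)%:R = r * v i.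
Proof.
move=> [[b [v NPv ev] ba] min_a]; exists v => // i.
have real_b : real_power R E r b by exists b; [exists v | move=> j].
by rewrite -(min_a b real_b ba i); exact: ev.
Qed.

Section RealPower.
Variables (R : realType) (d : nat) (E : expo d -> Prop) (r : R).
Hypotheses (mE : monomial_ideal E) (r_gt0 : 0 < r).

Lemma real_power_of_dominated u b :
  NP R E u -> (forall i, r * u i <= (b i)%:R) -> real_power R E r b.
Proof.
move=> NPu ub; have NPb : NP R E (fun i => (b i)%:R / r).
  by apply: (NP_up mE NPu) => i; rewrite ler_pdivlMr // mulrC.
by exists b => //; exists (fun i => (b i)%:R / r) => // i; rewrite mulrC divfK ?gt_eqF.
Qed.

Lemma min_gen_real_power_gap a u j :
  min_gen (real_power R E r) a -> NP R E u -> (forall i, r * u i <= (a i)%:R) ->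
  (a j)%:R - r * u j < 1.
Proof.
move=> [_ min_a] NPu ua; rewrite ltNge; apply/negP => gap.
have a_gt0 : (0 < a j)%N.
  have : 0 <= r * u j by exact: mulr_ge0 (ltW r_gt0) (NP_ge0 j NPu).
  by rewrite -(ltr0n R); lra.
pose b i := if i == j then (a i).-1 else a i.
have real_b : real_power R E r b.
  apply: real_power_of_dominated NPu _ => i; rewrite /b.
  have [->|_] := eqVneq i j; last exact: ua.
  have : ((a j).-1)%:R + 1 = (a j)%:R :> R by rewrite natr1 prednK.
  lra.
have ba : expo_le b a by move=> i; rewrite /b; case: eqP => // _; exact: leq_pred.
by have := min_a b real_b ba j; rewrite /b eqxx; lia.
Qed.

End RealPower.

Section Cset.
Variables (R : realType) (d : nat) (E : expo d -> Prop) (p q : nat).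
Hypotheses (mE : monomial_ideal E) (p_gt0 : (0 < p)%N) (q_gt0 : (0 < q)%N).

Let ratio_gt0 : 0 < p%:R / q%:R :> R.
Proof. by rewrite divr_gt0 ?ltr0n. Qed.

Lemma Cset_real_power a : Cset R E p q (natv R a) -> real_power R E (p%:R / q%:R) a.
Proof.
move=> [x [y [[u np_u ex] [s [s_ge0 _] ey] ea]]].
apply: (real_power_of_dominated mE ratio_gt0 (np_sub_NP np_u)) => i.
rewrite -[(a i)%:R]/(natv R a i) ea ex ey lerDl; apply: mulr_ge0 (s_ge0 i).
have : (1 : R) <= d%:R by rewrite ler1n (leq_ltn_trans (leq0n i) (ltn_ord i)).
have : q%:R^-1 <= 1 :> R by rewrite invf_le1 ?ler1n ?ltr0n.
lra.
Qed.

Lemma min_gen_real_power_Cset a :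
  min_gen (real_power R E (p%:R / q%:R)) a -> Cset R E p q (natv R a).
Proof.
move=> min_a; set r : R := p%:R / q%:R in min_a *.
have [v NPv ea] := min_gen_real_power_scale min_a.
have [u0 np_u0 u0v] := NP_above_np NPv.
have [u [np_u uv] touch] := np_segment_below np_u0 u0v.
pose w j := (a j)%:R - r * u j.
have ru_le_a j : r * u j <= (a j)%:R by rewrite ea; exact: ler_wpM2l (ltW ratio_gt0) _ _ (uv j).
have w_ge0 j : 0 <= w j by rewrite subr_ge0.
have w_lt1 j : w j < 1 := min_gen_real_power_gap mE ratio_gt0 j min_a (np_sub_NP np_u) ru_le_a.
exists (fun j => r * u j), w; split; first by exists u.
  have [d0|d_gt0] := posnP d; first exact: scale_simplex_dim0.
  apply: scale_simplex => //.
  have [j0 wj0] : exists j0, w j0 <= 1 - q%:R^-1.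
    case: touch => [[j0 uv0]|[m _ um]].
      by exists j0; rewrite /w ea uv0 subrr subr_ge0 invf_le1 ?ler1n ?ltr0n.
    by exists (Ordinal d_gt0); have := w_lt1 (Ordinal d_gt0); rewrite /w um; exact: frac_part_bound.
  exact: sumr_le_dim_sub (fun j => ltW (w_lt1 j)) wj0.
by move=> j; rewrite addrC subrK.
Qed.

End Cset.

Unset Implicit Arguments.

Theorem theorem3p5 (R : realType) (d : nat) (E : expo d -> Prop) (p q : nat) :
  monomial_ideal E -> (0 < p)%N -> (0 < q)%N ->
  [/\ (forall a, min_gen (real_power R E (p%:R / q%:R : R)) a -> Cset R E p q (natv R a)),
      (forall a, Cset R E p q (natv R a) -> real_power R E (p%:R / q%:R : R) a)
    & (forall a, real_power R E (p%:R / q%:R : R) a <->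
                 gen_ideal (fun b => Cset R E p q (natv R b)) a)].
Proof.
move=> mE p_gt0 q_gt0; split=> [a|a|a].
- exact: min_gen_real_power_Cset.
- exact: Cset_real_power.
split=> [real_a|[b Cb ba]].
  have [m min_m ma] := exists_min_gen real_a.
  by exists m => //; exact: min_gen_real_power_Cset.
exact: gen_ideal_monomial (Cset_real_power mE p_gt0 q_gt0 Cb) ba.
Qed.
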